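(* If a presheaf $P\colon\mathbb{O}\to\mathbf{Set}$ preserves pullbacks, then so do $\mathcal{P}_f P$, $\Delta P$ and $BP$. That is, $\mathcal{P}_f$, $\Delta$ and $B$ restrict to endofunctors on the full subcategory of $\mathbf{Set}^{\mathbb{O}}$ formed by pullback-preserving presheaves.
   Context: Fix a finite set $Act$ of action labels. An $Act$-labelled poset is $O=(X_O,\preccurlyeq_O,l_O)$ with partial order $\preccurlyeq_O$ and $l_O\colon X_O\to Act$; $|O|=\{(x,l_O(x))\}$. Morphisms preserve order and labels; order-embeddings also reflect order. $\mathbb{O}$ is the category whose objects are chosen representatives of the isomorphism classes of finite $Act$-labelled posets and whose morphisms are order-embeddings. $\boldsymbol{\delta}\colon\mathbb{O}\to\mathbb{O}$: $\boldsymbol{\delta}(O)$ is (the representative of) the poset obtained from $O$ by adding, for each antichain $K\subseteq|O|$ (including $\emptyset$) and each $a\in Act$, a fresh event $new(O,K,a)$ labelled $a$ above exactly the elements of $K$ (reflexive-transitively closed); for an order-embedding $\sigma\colon O\to O'$, $\boldsymbol{\delta}(\sigma)$ acts as $\sigma$ on old events and sends $new(O,K,a)$ to $new(O',\sigma(K),a)$. $\mathbf{Set}^{\mathbb{O}}$: functors $\mathbb{O}\to\mathbf{Set}$. $\mathcal{E}(O)=|O|$, with renaming on morphisms. $\mathcal{P}_f$: pointwise finite powerset (direct images). $\Delta P=P\circ\boldsymbol{\delta}$. $\mathcal{L}(O)=Act\times\mathcal{P}_f(\mathcal{E}(O))$. $BP=\mathcal{P}_f(\mathcal{L}\times\Delta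 P)$, products pointwise. *)

From HB Require Import structures.
From mathcomp Require Import all_boot.
From mathcomp Require Import boolp classical_sets cardinality.
Set Implicit Arguments. Unset Strict Implicit. Unset Printing Implicit Defensive.

Section Defs.
Variable Act : finType.

Record LPoset := {
  carrier :> finType;
  ple : rel carrier;
  ple_refl : forall x, ple x x;
  ple_anti : forall x y, ple x y -> ple y x -> x = y;
  ple_trans : forall x y z, ple x y -> ple y z -> ple x z;
  lab : carrier -> Act }.

Record Hom (O O' : LPoset) := {
  hfun :> O -> O';
  hemb : forall x y, ple (hfun x) (hfun y) = ple x y;
  hlab : forall x, lab (hfun x) = lab x }.

Definition antichain (O : LPoset) (K : {set O}) : bool :=
  [forall x in K, [forall y in K, ple x y ==> (x == y)]].

Definition newT (O : LPoset) : finType := ({K : {set O} | antichain K} * Act)%type.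

(* The carrier of delta(O): old events + one fresh event new(O,K,a) per antichain K and label a. *)
Definition dcar (O : LPoset) : finType := (O + newT O)%type.

(* Order of delta(O): reflexive-transitive closure of (order of O) together with
   k <= new(O,K,a) for k in K.  Explicitly: *)
Definition dle (O : LPoset) : rel (dcar O) := fun u v =>
  match u, v with
  | inl x, inl y => ple x y
  | inl x, inr n => [exists k in val n.1, ple x k]
  | inr _, inl _ => false
  | inr n, inr m => n == m
  end.

Definition dlab (O : LPoset) (u : dcar O) : Act :=
  match u with inl x => lab x | inr n => n.2 end.

Lemma dle_refl O (x : dcar O) : dle x x.
Proof. by case: x => [x|n] /=; rewrite ?ple_refl. Qed.

Lemma dle_anti O (x y : dcar O) : dle x y -> dle y x -> x = y.
Proof.
case: x => [x|n]; case: y => [y|m] //=.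
- by move=> h1 h2; rewrite (ple_anti h1 h2).
- by move/eqP->.
Qed.

Lemma dle_trans O (x y z : dcar O) : dle x y -> dle y z -> dle x z.
Proof.
case: x => [x|n]; case: y => [y|m]; case: z => [z|p] //=.
- exact: ple_trans.
- move=> hxy /existsP[k /andP[kK hyk]]; apply/existsP; exists k.
  by rewrite kK (ple_trans hxy hyk).
- by move=> h /eqP <-.
- by move=> /eqP -> .
Qed.

Definition delta (O : LPoset) : LPoset :=
  @Build_LPoset (dcar O) (@dle O) (@dle_refl O) (@dle_anti O) (@dle_trans O) (@dlab O).

Lemma hom_inj O O' (s : Hom O O') : injective s.
Proof.
move=> x y e; apply: ple_anti.
- by rewrite -(hemb s) e ple_refl.
- by rewrite -(hemb s) e ple_refl.
Qed.

Lemma antichain_image O O' (s : Hom O O') (K : {set O}) :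
  antichain K -> antichain [set s x | x in K].
Proof.
move=> /forallP aK; apply/forallP => u; apply/implyP => /imsetP[x xK ->].
apply/forallP => v; apply/implyP => /imsetP[y yK ->].
rewrite hemb; apply/implyP => hxy.
have := aK x; rewrite xK /= => /forallP /(_ y); rewrite yK hxy /= => /eqP ->.
exact: eqxx.
Qed.

Definition dnew O O' (s : Hom O O') (n : newT O) : newT O' :=
  (exist _ [set s x | x in val n.1] (antichain_image s (valP n.1)), n.2).

Definition dfun O O' (s : Hom O O') (u : dcar O) : dcar O' :=
  match u with inl x => inl (s x) | inr n => inr (dnew s n) end.

Lemma dfun_emb O O' (s : Hom O O') (x y : dcar O) :
  dle (dfun s x) (dfun s y) = dle x y.
Proof.
case: x => [x|n]; case: y => [y|m] //=.
- exact: hemb.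
- apply/existsP/existsP => [[k /andP[/imsetP[k' k'K ->] h]]|[k /andP[kK h]]].
  + by exists k'; rewrite k'K -(hemb s).
  + by exists (s k); rewrite imset_f //= hemb.
- apply/eqP/eqP => [e|-> //].
  case: n m e => [[K aK] a] [[L aL] b] [e1 e2]; subst b.
  congr pair; apply: val_inj => /=.
  by apply: (imset_inj (@hom_inj _ _ s)).
Qed.

Lemma dfun_lab O O' (s : Hom O O') (x : dcar O) : dlab (dfun s x) = dlab x.
Proof. by case: x => [x|n] //=; rewrite hlab. Qed.

Definition deltaH O O' (s : Hom O O') : Hom (delta O) (delta O') :=
  @Build_Hom (delta O) (delta O') (dfun s) (@dfun_emb O O' s) (@dfun_lab O O' s).

(* Presheaves O -> Set (data); functoriality is the predicate is_functor. *)
Record presheaf := {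
  pobj :> LPoset -> Type;
  pmap : forall O O', Hom O O' -> pobj O -> pobj O' }.
Arguments pmap : clear implicits.
Arguments pmap p {O O'}.

Definition is_functor (P : presheaf) : Prop :=
  (forall O (f : Hom O O), (forall x, f x = x) -> forall y, pmap P f y = y) /\
  (forall O1 O2 O3 (f : Hom O1 O2) (g : Hom O2 O3) (h : Hom O1 O3),
     (forall x, h x = g (f x)) -> forall y, pmap P h y = pmap P g (pmap P f y)).

Definition is_pullback (A B C D : LPoset) (p1 : Hom A B) (p2 : Hom A C)
  (f : Hom B D) (g : Hom C D) : Prop :=
  (forall a, f (p1 a) = g (p2 a)) /\
  forall (X : LPoset) (h1 : Hom X B) (h2 : Hom X C),
    (forall x, f (h1 x) = g (h2 x)) ->
    (exists u : Hom X A, forall x, p1 (u x) = h1 x /\ p2 (u x) = h2 x) /\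
    (forall u u' : Hom X A,
       (forall x, p1 (u x) = h1 x /\ p2 (u x) = h2 x) ->
       (forall x, p1 (u' x) = h1 x /\ p2 (u' x) = h2 x) ->
       forall x, u x = u' x).

Definition set_pullback (A B C D : Type) (p1 : A -> B) (p2 : A -> C)
  (f : B -> D) (g : C -> D) : Prop :=
  (forall a, f (p1 a) = g (p2 a)) /\
  forall b c, f b = g c -> exists! a, p1 a = b /\ p2 a = c.

Definition preserves_pullbacks (P : presheaf) : Prop :=
  forall (A B C D : LPoset) (p1 : Hom A B) (p2 : Hom A C) (f : Hom B D) (g : Hom C D),
    is_pullback p1 p2 f g ->
    set_pullback (pmap P p1) (pmap P p2) (pmap P f) (pmap P g).

Local Open Scope classical_set_scope.
Definition Pfin (T : Type) := {A : set T | finite_set A}.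

Definition Pfin_map (T T' : Type) (h : T -> T') (A : Pfin T) : Pfin T' :=
  exist _ (h @` (proj1_sig A)) (finite_image h (proj2_sig A)).

Definition PfP (P : presheaf) : presheaf :=
  @Build_presheaf (fun O => Pfin (P O)) (fun O O' s => Pfin_map (pmap P s)).

Definition DeltaP (P : presheaf) : presheaf :=
  @Build_presheaf (fun O => P (delta O)) (fun O O' s => pmap P (deltaH s)).

(* E(O) = |O| (events, whose label is determined), L(O) = Act x Pf(E(O)). *)
Definition Lobj (O : LPoset) : Type := (Act * Pfin O)%type.
Definition Lmap O O' (s : Hom O O') (l : Lobj O) : Lobj O' := (l.1, Pfin_map s l.2).

Definition BP (P : presheaf) : presheaf :=
  @Build_presheaf (fun O => Pfin (Lobj O * P (delta O))%type)
    (fun O O' s => Pfin_map (fun lp : Lobj O * P (delta O) =>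
                               (Lmap s lp.1, pmap P (deltaH s) lp.2))).

End Defs.

From Pilot Require Import Defs.
From mathcomp Require Import all_boot.
From mathcomp Require Import boolp classical_sets cardinality.
Set Implicit Arguments. Unset Strict Implicit.

(* Every morphism of O is injective, and a square of O is a pullback exactly
   when its underlying square of sets is one.  Hence a pullback-preserving P
   sends morphisms to injections (the kernel pair of a mono is trivial), and
   it suffices to show that finite powersets, delta and products preserve
   pullbacks of sets along injective cospans.  For the finite powerset, the
   pullback of X and Y is the preimage of X; for delta, a fresh event over an
   antichain K pulls back to the fresh event over the preimage of K, which is
   again an antichain. *)

Section SetPullbacks.
Variables (A B C D : Type) (p1 : A -> B) (p2 : A -> C) (f : B -> D) (g : C -> D).

Lemma inj_set_pullback :
  (forall a, f (p1 a) = g (p2 a)) -> injective p1 ->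
  (forall b c, f b = g c -> exists a, p1 a = b /\ p2 a = c) ->
  set_pullback p1 p2 f g.
Proof.
move=> com p1_inj ex; split=> // b c /ex[a [e1 e2]].
by exists a; split=> // a' [e1' _]; apply: p1_inj; rewrite e1 e1'.
Qed.

Lemma set_pullback_inj_l : set_pullback p1 p2 f g -> injective g -> injective p1.
Proof.
move=> [com uq] g_inj a a' e.
have e2 : p2 a = p2 a' by apply: g_inj; rewrite -!com e.
have [a0 [_ u]] := uq (p1 a) (p2 a) (com a).
by rewrite -(u a) // -(u a') // e e2.
Qed.

End SetPullbacks.

Lemma kernel_pair_set_pullback (B D : Type) (f : B -> D) :
  injective f -> set_pullback id id f f.
Proof.
move=> f_inj; apply: inj_set_pullback => // b c /f_inj <-.
by exists b.
Qed.

Lemma kernel_pair_inj (A B D : Type) (p : A -> B) (f : B -> D) :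
  set_pullback p p f f -> injective f.
Proof. by move=> [_ uq] x y /uq[a [[<- <-] _]]. Qed.

Lemma set_pullback_prod A1 B1 C1 D1 A2 B2 C2 D2
  (p1 : A1 -> B1) (p2 : A1 -> C1) (f : B1 -> D1) (g : C1 -> D1)
  (q1 : A2 -> B2) (q2 : A2 -> C2) (k : B2 -> D2) (l : C2 -> D2) :
  set_pullback p1 p2 f g -> set_pullback q1 q2 k l ->
  set_pullback (fun x => (p1 x.1, q1 x.2)) (fun x => (p2 x.1, q2 x.2))
    (fun x => (f x.1, k x.2)) (fun x => (g x.1, l x.2)).
Proof.
move=> [com1 uq1] [com2 uq2]; split; first by move=> [a a'] /=; rewrite com1 com2.
move=> [b b'] [c c'] [/uq1[a [[e1 e2] u1]] /uq2[a' [[e1' e2'] u2]]].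
exists (a, a'); split; first by rewrite /= e1 e2 e1' e2'.
by move=> [x y] [[/= ? ?] [? ?]]; rewrite (u1 x) ?(u2 y).
Qed.

Lemma inj_prod A B A' B' (f : A -> A') (g : B -> B') :
  injective f -> injective g -> injective (fun x : A * B => (f x.1, g x.2)).
Proof. by move=> f_inj g_inj [a b] [c d] [/f_inj -> /g_inj ->]. Qed.

Section FinitePowerset.
Local Open Scope classical_set_scope.

Lemma eq_Pfin T (X Y : Pfin T) : proj1_sig X = proj1_sig Y -> X = Y.
Proof. by case: X => X hX; case: Y => Y hY /= E; subst Y; congr exist. Qed.

Lemma Pfin_map_inj T T' (h : T -> T') : injective h -> injective (Pfin_map h).
Proof.
move=> h_inj X Y /(congr1 (@proj1_sig _ _)) /= E.
apply: eq_Pfin; apply/seteqP; split => x Xx.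
  have : (h @` proj1_sig Y) (h x) by rewrite -E; exists x.
  by case=> y Yy /h_inj <-.
have : (h @` proj1_sig X) (h x) by rewrite E; exists x.
by case=> y Yy /h_inj <-.
Qed.

Lemma Pfin_set_pullback (A B C D : Type) (p1 : A -> B) (p2 : A -> C)
    (f : B -> D) (g : C -> D) :
  set_pullback p1 p2 f g -> injective g ->
  set_pullback (Pfin_map p1) (Pfin_map p2) (Pfin_map f) (Pfin_map g).
Proof.
move=> pb g_inj; have p1_inj := set_pullback_inj_l pb g_inj.
case: pb => com uq; apply: inj_set_pullback.
- move=> [Z finZ]; apply: eq_Pfin; apply/seteqP; split => /=.
  + by move=> _ [_ [a Za <-] <-]; exists (p2 a); [exists a | rewrite com].
  + by move=> _ [_ [a Za <-] <-]; exists (p1 a); [exists a | rewrite com].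
- exact: Pfin_map_inj.
- move=> [X finX] [Y finY] /(congr1 (@proj1_sig _ _)) /= E.
  have finZ : finite_set (p1 @^-1` X) by apply: finite_preimage => // ? ? _ _ /p1_inj.
  exists (exist _ _ finZ); split; apply: eq_Pfin; apply/seteqP; split => /=.
  + by move=> _ [a Xa <-].
  + move=> x Xx; have : (g @` Y) (f x) by rewrite -E; exists x.
    by case=> y _ /esym/uq[a [[e1 _] _]]; exists a; rewrite /preimage /= e1.
  + move=> _ [a Xa <-]; have : (g @` Y) (f (p1 a)) by rewrite -E; exists (p1 a).
    by case=> y Yy; rewrite com => /g_inj <-.
  + move=> y Yy; have : (f @` X) (g y) by rewrite E; exists y.
    by case=> x Xx /uq[a [[e1 e2] _]]; exists a; rewrite /preimage /= ?e1.
Qed.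

End FinitePowerset.

Lemma imset_preimset_pullback (A B C D : finType) (p1 : A -> B) (p2 : A -> C)
    (f : B -> D) (g : C -> D) (K : {set B}) (L : {set C}) :
  set_pullback p1 p2 f g -> injective g -> f @: K = g @: L ->
  p1 @: (p1 @^-1: K) = K /\ p2 @: (p1 @^-1: K) = L.
Proof.
move=> [com uq] g_inj E; split; apply/setP => y; apply/imsetP/idP.
- by case=> a; rewrite inE => Ka ->.
- move=> Ky; have : f y \in g @: L by rewrite -E imset_f.
  case/imsetP=> c _ /uq[a [[e1 _] _]].
  by exists a; rewrite ?inE e1.
- case=> a; rewrite inE => Ka ->.
  have : f (p1 a) \in g @: L by rewrite -E imset_f.
  by rewrite com => /imsetP[c Lc /g_inj ->].
- move=> Ly; have : g y \in f @: K by rewrite E imset_f.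
  case/imsetP=> k Kk /esym/uq[a [[e1 e2] _]].
  by exists a; rewrite ?inE ?e1 ?e2.
Qed.

Section LabelledPosets.
Variable Act : finType.

Definition point (l : Act) : LPoset Act :=
  @Build_LPoset Act unit (fun _ _ => true) (fun _ => erefl)
    (fun x y _ _ => match x, y with tt, tt => erefl end)
    (fun _ _ _ _ _ => erefl) (fun _ => l).

Definition pointHom (O : LPoset Act) (l : Act) (x : O) (e : lab x = l) :
    Hom (point l) O :=
  @Build_Hom Act (point l) O (fun _ => x) (fun _ _ => ple_refl x) (fun _ => e).

Definition idHom (O : LPoset Act) : Hom O O :=
  @Build_Hom Act O O id (fun _ _ => erefl) (fun _ => erefl).

Lemma antichain_preimset (O O' : LPoset Act) (s : Hom O O') (K : {set O'}) :
  antichain K -> antichain (s @^-1: K).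
Proof.
move=> /forallP antiK; apply/forallP => x; apply/implyP; rewrite inE => Kx.
apply/forallP => y; apply/implyP; rewrite inE => Ky; apply/implyP => le_xy.
have /forallP := implyP (antiK (s x)) Kx.
by move=> /(_ (s y)); rewrite Ky hemb le_xy => /eqP /(@hom_inj _ _ _ s) ->.
Qed.

Section Square.
Variables (A B C D : LPoset Act) (p1 : Hom A B) (p2 : Hom A C).
Variables (f : Hom B D) (g : Hom C D).

Lemma is_pullback_set_pullback : is_pullback p1 p2 f g -> set_pullback p1 p2 f g.
Proof.
move=> [com univ]; apply: inj_set_pullback => // [|b c e]; first exact: hom_inj.
have lab_c : lab c = lab b by rewrite -(hlab g) -e hlab.
have [[u hu] _] := univ _ (pointHom (erefl (lab b))) (pointHom lab_c) (fun _ => e).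
by exists (u tt); apply: hu.
Qed.

Lemma set_pullback_is_pullback : set_pullback p1 p2 f g -> is_pullback p1 p2 f g.
Proof.
move=> [com uq]; split => // X h1 h2 hcom; split; last first.
  by move=> u u' hu hu' x; apply: (@hom_inj _ _ _ p1); rewrite (hu x).1 (hu' x).1.
have lift x : exists a, p1 a = h1 x /\ p2 a = h2 x.
  by have [a [ha _]] := uq _ _ (hcom x); exists a.
have [u hu] := choice lift.
have u_emb x y : ple (u x) (u y) = ple x y.
  by rewrite -(hemb p1) (hu x).1 (hu y).1 hemb.
have u_lab x : lab (u x) = lab x by rewrite -(hlab p1) (hu x).1 hlab.
by exists (Build_Hom u_emb u_lab).
Qed.

Lemma delta_set_pullback :
  set_pullback p1 p2 f g ->
  set_pullback (deltaH p1) (deltaH p2) (deltaH f) (deltaH g).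
Proof.
move=> pb; have [com uq] := pb; apply: inj_set_pullback.
- case=> [a|[K l]] /=; first by rewrite com.
  congr (inr (_, l)); apply: val_inj => /=.
  by rewrite -!imset_comp; apply: eq_imset => x /=; rewrite com.
- exact: hom_inj.
- move=> [b|[K l]] [c|[L l']] //= [].
    by case/uq=> a [[e1 e2] _]; exists (inl a); rewrite /= e1 e2.
  move=> /(congr1 val) /val_inj /= E <-.
  have [eK eL] := imset_preimset_pullback pb (@hom_inj _ _ _ g) E.
  exists (inr (exist (@antichain _ A) _ (antichain_preimset p1 (valP K)), l)).
  by split; congr (inr (_, l)); apply: val_inj; rewrite /= ?eK ?eL.
Qed.

End Square.

Lemma pmap_inj (P : presheaf Act) (O O' : LPoset Act) (s : Hom O O') :
  preserves_pullbacks P -> injective (@Defs.pmap Act P O O' s).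
Proof.
move=> HP; apply: (@kernel_pair_inj _ _ _ (@Defs.pmap Act P O O (idHom O))).
by apply/HP/set_pullback_is_pullback/kernel_pair_set_pullback/hom_inj.
Qed.

Variable P : presheaf Act.
Hypothesis HP : preserves_pullbacks P.

Lemma PfP_preserves_pullbacks : preserves_pullbacks (PfP P).
Proof.
move=> A B C D p1 p2 f g /HP pb; exact: Pfin_set_pullback pb (pmap_inj HP).
Qed.

Lemma DeltaP_preserves_pullbacks : preserves_pullbacks (DeltaP P).
Proof.
move=> A B C D p1 p2 f g /is_pullback_set_pullback pb.
exact/HP/set_pullback_is_pullback/delta_set_pullback.
Qed.

Lemma BP_preserves_pullbacks : preserves_pullbacks (BP P).
Proof.
move=> A B C D p1 p2 f g pb; apply: Pfin_set_pullback.
- apply: set_pullback_prod; last exact: DeltaP_preserves_pullbacks pb.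
  apply: (@set_pullback_prod _ _ _ _ _ _ _ _ id id id id).
    exact: kernel_pair_set_pullback.
  exact: Pfin_set_pullback (is_pullback_set_pullback pb) (@hom_inj _ _ _ g).
- apply: inj_prod; last exact: pmap_inj.
  move=> [a X] [b Y] e; have /= -> := congr1 fst e.
  by have /= /(Pfin_map_inj (@hom_inj _ _ _ g)) -> := congr1 snd e.
Qed.

End LabelledPosets.

Theorem proposition10 (Act : finType) (P : presheaf Act) :
  is_functor P -> preserves_pullbacks P ->
  preserves_pullbacks (PfP P) /\ preserves_pullbacks (DeltaP P) /\
  preserves_pullbacks (BP P).
Proof.
move=> _ HP; split; first exact: PfP_preserves_pullbacks.
by split; [exact: DeltaP_preserves_pullbacks | exact: BP_preserves_pullbacks].
Qed.
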